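(* Let $k\ge 2$ be an integer and let $H=(V,\mathcal E)$ be a finite hypergraph that is hereditarily $k$-colorable. Set $\lambda := \frac{k}{k-1}$. Let $\mathcal L=\{L_v\}_{v\in V}$ be a family of finite sets of positive integers such that $\sum_{v\in V}\lambda^{-|L_v|} < 1$. Then $H$ admits a unique-maximum coloring from $\mathcal L$, i.e., there is a unique-maximum coloring $C$ of $H$ with $C(v)\in L_v$ for every $v\in V$.
   Context: A hypergraph $H=(V,\mathcal E)$ has finite vertex set $V$ and a family $\mathcal E$ of nonempty subsets of $V$ (hyperedges). A coloring $C\colon V\to\mathbb Z_{>0}$ is proper if every hyperedge with at least two vertices is non-monochromatic. It is a unique-maximum coloring if for every $S\in\mathcal E$, the maximum color $\max_{v\in S}C(v)$ is attained by exactly one vertex of $S$. For $V'\subseteq V$, the induced sub-hypergraph is $H[V']=(V',\{S\cap V' : S\in\mathcal E\})$. $H$ is hereditarily $k$-colorable if for every $V'\subseteq V$, $H[V']$ admits a proper coloring with at most $k$ colors. Given a family $\mathcal L=\{L_v\}_{v\in V}$ of sets of positive integers, $H$ admits a (unique-maximum) coloring from $\mathcal L$ if there is such a coloring with $C(v)\in L_v$ for all $v$. *)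

From mathcomp Require Import all_boot all_order all_algebra.
Set Implicit Arguments. Unset Strict Implicit. Unset Printing Implicit Defensive.

Definition hyperedges_nonempty (V : finType) (E : {set {set V}}) : Prop :=
  forall S, S \in E -> S != set0.

Definition proper_k_coloring_on (V : finType) (E : {set {set V}}) (W : {set V})
  (k : nat) (C : V -> nat) : Prop :=
  (forall v, v \in W -> 1 <= C v <= k) /\
  (forall S, S \in E -> 2 <= #|S :&: W| ->
     exists u v, [/\ u \in S :&: W, v \in S :&: W & C u != C v]).

Definition hereditarily_colorable (V : finType) (E : {set {set V}}) (k : nat) : Prop :=
  forall W : {set V}, exists C : V -> nat, proper_k_coloring_on E W k C.

Definition unique_max_coloring (V : finType) (E : {set {set V}}) (C : V -> nat) : Prop :=
  (forall v, 0 < C v) /\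
  (forall S, S \in E ->
     exists2 u, u \in S &
       (forall w, w \in S -> w != u -> C w < C u)).

From mathcomp Require Import all_boot all_order all_algebra lra.
Import Order.TTheory GRing.Theory Num.Theory.

Set Implicit Arguments.
Unset Strict Implicit.
Unset Printing Implicit Defensive.

(* Induction on the total size of the lists.  Let c be the least colour
   occurring in any list and U the set of vertices whose list contains c.
   Colour H[U] properly with k colours and let X be a colour class carrying
   at least a 1/k share of the weight of U, where v weighs q^|L_v| with
   q = (k-1)/k.  Give every vertex of X the colour c, delete X, delete c from
   the remaining lists, and recurse.  Deleting c multiplies the weight of
   U \ X by 1/q = k/(k-1), so the total weight does not increase.
   In the recursive colouring every colour exceeds c, so an edge meeting W \ X
   keeps its unique maximum there; an edge contained in X within W has at most
   one vertex in W because X is a colour class. *)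

Section UniqueMaxListColoring.

Variables (V : finType) (E : {set {set V}}).

Definition unique_max_on (W : {set V}) (C : V -> nat) : Prop :=
  forall S, S \in E -> S :&: W != set0 ->
    exists2 u, u \in S :&: W & forall w, w \in S :&: W -> w != u -> C w < C u.

Lemma unique_max_on_extend (W X : {set V}) (c : nat) (C : V -> nat) :
  (forall S, S \in E -> S :&: W \subset X -> #|S :&: W| <= 1) ->
  unique_max_on (W :\: X) C -> (forall v, v \in W :\: X -> c < C v) ->
  unique_max_on W (fun v => if v \in X then c else C v).
Proof.
move=> smallX umaxC gtC S SE /set0Pn[u0 u0SW].
have [SWX0 | SWXn0] := eqVneq (S :&: (W :\: X)) set0.
  have SWX : S :&: W \subset X.
    apply/subsetP => v vSW; apply: contraT => vX.
    by rewrite -(in_set0 v) -SWX0 setIDA in_setD vX.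
  exists u0 => // w wSW wu0; have /card_le1P/(_ u0 u0SW w) := smallX S SE SWX.
  by rewrite wSW inE (negPf wu0).
have [u uSWX maxu] := umaxC S SE SWXn0.
move: uSWX; rewrite setIDA in_setD => /andP[uX uSW].
exists u => // w wSW wu; rewrite (negPf uX).
case: ifP => wX; first by apply: gtC; rewrite in_setD uX; case/setIP: uSW.
by apply: maxu wu; rewrite setIDA in_setD wX.
Qed.

Lemma proper_coloring_class_small (U : {set V}) (k : nat) (col : V -> nat) (j : nat) S :
  proper_k_coloring_on E U k col -> S \in E ->
  S :&: U \subset [set v | col v == j] -> #|S :&: U| <= 1.
Proof.
move=> [_ properC] SE /subsetP mono; rewrite leqNgt; apply/negP.
case/(properC S SE) => u [w [/mono + /mono +]].
by rewrite !inE => /eqP-> /eqP->; rewrite eqxx.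
Qed.

Lemma heavy_color_class (R : realDomainType) (U : {set V}) (k : nat)
    (col : V -> nat) (f : V -> R) :
  0 < k -> (forall v, v \in U -> 1 <= col v <= k) ->
  exists j, (\sum_(v in U) f v <= k%:R * \sum_(v in [set v in U | col v == j]) f v)%R.
Proof.
move=> k_gt0 col_range.
have sumU : (\sum_(v in U) f v
             = \sum_(1 <= j < k.+1) \sum_(v in [set v in U | col v == j]) f v)%R.
  under [RHS]eq_bigr do rewrite big_mkcond.
  rewrite exchange_big big_mkcond; apply: eq_bigr => v _.
  under eq_bigr do rewrite inE.
  have [vU|_] := boolP (v \in U); last by rewrite big1.
  rewrite -big_mkcond /= (eq_bigl (pred1 (col v))); last by move=> j; rewrite eq_sym.
  by rewrite big_nat1_eq ltnS col_range.
set s := fun j => (\sum_(v in [set v in U | col v == j]) f v)%R in sumU *.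
pose heavy j := (\sum_(v in U) f v <= k%:R * s j)%R.
have [/hasP[j _ /= heavy_j] | /hasPn light] := boolP (has heavy (index_iota 1 k.+1)).
  by exists j.
have : (\sum_(1 <= j < k.+1) k%:R * s j < \sum_(1 <= j < k.+1) \sum_(v in U) f v)%R.
  apply: ltr_sum_nat => [|j j_range]; first by rewrite ltnS.
  by rewrite ltNge light // mem_index_iota.
by rewrite -mulr_sumr -sumU sumr_const_nat subSS subn0 mulr_natl ltxx.
Qed.

Lemma sum_drop_heavy_class_le (R : realFieldType) (q : R) (k : nat)
    (W U X : {set V}) (f g : V -> R) :
  0 < k -> (0 < q)%R -> (k%:R * (1 - q) <= 1)%R -> X \subset U -> U \subset W ->
  (forall v, v \in W :\: U -> g v = f v) ->
  (forall v, v \in U :\: X -> q * g v = f v)%R ->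
  (forall v, 0 <= f v)%R ->
  (\sum_(v in U) f v <= k%:R * \sum_(v in X) f v)%R ->
  (\sum_(v in W :\: X) g v <= \sum_(v in W) f v)%R.
Proof.
move=> k_gt0 q_gt0 kq XU UW gf qgf f_ge0 heavy.
have sumWX : (\sum_(v in W :\: X) g v
              = \sum_(v in U :\: X) g v + \sum_(v in W :\: U) f v)%R.
  rewrite (big_setID U) setIDAC (setIidPr UW) setDDl (setUidPr XU).
  by rewrite (eq_bigr _ gf).
have sumU : (\sum_(v in U) f v = \sum_(v in X) f v + \sum_(v in U :\: X) f v)%R.
  by rewrite (big_setID X) (setIidPr XU).
have sumW : (\sum_(v in W) f v = \sum_(v in U) f v + \sum_(v in W :\: U) f v)%R.
  by rewrite (big_setID U) (setIidPr UW).
rewrite sumU in heavy sumW.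
set A := (\sum_(v in U :\: X) f v)%R in sumW heavy.
set B := (\sum_(v in X) f v)%R in sumW heavy.
have qG : (q * \sum_(v in U :\: X) g v = A)%R.
  by rewrite mulr_sumr; apply: eq_bigr.
have BA_ge0 : (0 <= B + A)%R by rewrite addr_ge0 ?sumr_ge0.
have kBA := ler_wpM2r BA_ge0 kq.
have k_pos : (0 < k%:R :> R)%R by rewrite ltr0n.
have AqBA : (A <= q * (B + A))%R.
  rewrite -(ler_pM2l k_pos); nra.
have : (\sum_(v in U :\: X) g v <= B + A)%R by rewrite -(ler_pM2l q_gt0) qG.
rewrite sumW sumWX; lra.
Qed.

Lemma size_gt0_of_weight_lt1 (R : realDomainType) (q : R) (W : {set V})
    (L : V -> seq nat) :
  (0 <= q)%R -> (\sum_(v in W) q ^+ size (L v) < 1)%R ->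
  forall v, v \in W -> 0 < size (L v).
Proof.
move=> q_ge0 weight_lt1 v vW; rewrite lt0n; apply: contraTneq weight_lt1 => size0.
rewrite (bigD1 v) //= size0 expr0 -leNgt lerDl.
by rewrite sumr_ge0 // => w _; rewrite exprn_ge0.
Qed.

Lemma sum_size_rem_lt (W W' : {set V}) (L : V -> seq nat) (c : nat) (u : V) :
  W' \subset W -> u \in W -> c \in L u ->
  \sum_(v in W') size (rem c (L v)) < \sum_(v in W) size (L v).
Proof.
move=> W'W uW cLu; apply: (@leq_ltn_trans (\sum_(v in W) size (rem c (L v)))).
  by rewrite [X in _ <= X](big_setID W') (setIidPr W'W) leq_addr.
rewrite (bigD1 u) // [X in _ < X](bigD1 u) //= -addSn leq_add //.
  by rewrite size_rem // prednK // lt0n size_eq0; apply: contraTneq cLu => ->.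
by apply: leq_sum => v _; rewrite size_subseq ?rem_subseq.
Qed.

Variables (R : realFieldType) (k : nat) (q : R).
Hypotheses (k_gt0 : 0 < k) (colorableE : hereditarily_colorable E k).
Hypotheses (q_gt0 : (0 < q)%R) (kq : (k%:R * (1 - q) <= 1)%R).

Lemma unique_max_list_coloring (W : {set V}) (L : V -> seq nat) :
  (forall v, uniq (L v)) -> (\sum_(v in W) q ^+ size (L v) < 1)%R ->
  exists C : V -> nat, (forall v, v \in W -> C v \in L v) /\ unique_max_on W C.
Proof.
have [n] := ubnP (\sum_(v in W) size (L v)); elim: n => // n IH in W L *.
move=> sum_lt uniqL weight_lt1.
have [->|[u0 u0W]] := set_0Vmem W.
  by exists (fun _ => 0); split=> [v|S _]; rewrite ?inE // setI0 eqxx.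
have L_ne := size_gt0_of_weight_lt1 (ltW q_gt0) weight_lt1.
have has_c : exists c, [exists v in W, c \in L v].
  have := L_ne u0 u0W; case Lu0: (L u0) => [|c s] // _.
  by exists c; apply/existsP; exists u0; rewrite u0W Lu0 mem_head.
have [c /existsP[u /andP[uW cLu]] c_min] := ex_minnP has_c.
pose U := [set v in W | c \in L v].
have [col col_proper] := colorableE U.
have [j heavy] := heavy_color_class (fun v => q ^+ size (L v))%R k_gt0 col_proper.1.
pose X := [set v in U | col v == j].
have XU : X \subset U by apply/subsetP => v; rewrite inE => /andP[].
have UW : U \subset W by apply/subsetP => v; rewrite inE => /andP[].
pose L' v := rem c (L v).
have weight'_lt1 : (\sum_(v in W :\: X) q ^+ size (L' v) < 1)%R.
  apply: le_lt_trans weight_lt1.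
  apply: (sum_drop_heavy_class_le (g := fun v => q ^+ size (L' v))%R
           k_gt0 q_gt0 kq XU UW _ _ _ heavy) => v.
  - by rewrite !inE => /andP[+ vW]; rewrite vW => cLv; rewrite /L' rem_id.
  - rewrite !inE => /andP[_ /andP[vW cLv]].
    by rewrite /L' size_rem // -exprS prednK // L_ne.
  - exact: exprn_ge0 (ltW q_gt0).
have [C' [C'L' umaxC']] := IH (W :\: X) L'
  (leq_trans (sum_size_rem_lt (subsetDl W X) uW cLu) sum_lt)
  (fun v => rem_uniq c (uniqL v)) weight'_lt1.
exists (fun v => if v \in X then c else C' v); split.
  move=> v vW; case: ifP => vX; first by move: vX; rewrite !inE => /andP[/andP[]].
  by apply: (mem_rem (x := c)); apply: C'L'; rewrite inE vX.
apply: unique_max_on_extend => // [S SE SWX | v vWX].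
  apply: leq_trans (proper_coloring_class_small (j := j) col_proper SE _).
    by apply/subset_leq_card/subsetIP; split; [exact: subsetIl | exact: subset_trans XU].
  apply: subset_trans (setIS S UW) (subset_trans SWX _).
  by apply/subsetP => v; rewrite !inE => /andP[].
have /C'L' := vWX; rewrite mem_rem_uniq // inE => /andP[C'v_neq_c C'vL].
rewrite ltn_neqAle eq_sym C'v_neq_c c_min //; apply/existsP; exists v.
by rewrite C'vL andbT; move: vWX; rewrite inE => /andP[].
Qed.
End UniqueMaxListColoring.

Theorem theorem2p4 (k : nat) (V : finType) (E : {set {set V}}) (L : V -> seq nat) :
  2 <= k ->
  hyperedges_nonempty E ->
  hereditarily_colorable E k ->
  (forall v, uniq (L v) /\ all (fun c => 0 < c) (L v)) ->
  (\sum_(v : V) ((k%:R / (k.-1)%:R) ^- (size (L v)) : rat) < 1)%R ->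
  exists C : V -> nat, unique_max_coloring E C /\ (forall v, C v \in L v).
Proof.
move=> k_ge2 edges_ne colorableE L_ok weight_lt1.
pose q : rat := ((k.-1)%:R / k%:R)%R.
have k_pos : (0 < k%:R :> rat)%R by rewrite ltr0n ltnW.
have k1_pos : (0 < (k.-1)%:R :> rat)%R by rewrite ltr0n -ltnS (ltn_predK k_ge2).
have q_gt0 : (0 < q)%R by rewrite divr_gt0.
have kq : (k%:R * (1 - q) <= 1)%R.
  have qk : (q * k%:R = (k.-1)%:R)%R by rewrite divfK ?lt0r_neq0.
  have k_succ : (k%:R = (k.-1)%:R + 1 :> rat)%R by rewrite natr1 (ltn_predK k_ge2).
  lra.
have weightT : (\sum_(v in [set: V]) q ^+ size (L v) < 1)%R.
  rewrite big_set; under eq_bigr do rewrite /q -invf_div exprVn.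
  exact: weight_lt1.
have [C [CL umaxC]] := unique_max_list_coloring (ltnW k_ge2) colorableE q_gt0 kq
  (fun v => (L_ok v).1) weightT.
have {}CL v : C v \in L v by apply: CL; rewrite inE.
exists C; split=> //; split=> [v | S SE].
  by have /allP := (L_ok v).2; apply.
by have := umaxC S SE; rewrite setIT => /(_ (edges_ne S SE)).
Qed.
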